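(* At the terminal level $\mathfrak{m}$, the unique closed communicating class $\mathscr{P}^{\star,\mathfrak{m}}_1$ of $\mathfrak{X}^{\star,\mathfrak{m}}$ consists exactly of the ground states: $$\bigcup_{\mathcal{P}\in\mathscr{P}^{\star,\mathfrak{m}}_1}\mathcal{P}=\mathcal{S}.$$
   Context: Setting. Let $\Omega$ be a finite set with a connected undirected graph structure; write $\eta\sim\xi$ if $\{\eta,\xi\}$ is an edge. Let $\mathbb{H}:\Omega\to\mathbb{R}$. Paths and heights. A path $\omega:\eta\to\xi$ is a sequence $(\omega_n)_{n=0}^N$ with $\omega_0=\eta$, $\omega_N=\xi$ and $\omega_n\sim\omega_{n+1}$ ($N=0$ allowed). Its height is $\Phi_\omega:=\max_n\mathbb{H}(\omega_n)$. Set $\Phi(\eta,\xi):=\min_{\omega:\eta\to\xi}\Phi_\omega$. For nonempty sets, $\Phi(\mathcal{A},\mathcal{B}):=\min_{\eta\in\mathcal{A},\xi\in\mathcal{B}}\Phi(\eta,\xi)$, and $\Phi(\mathcal{A},\eta):=\Phi(\mathcal{A},\{\eta\})$. Ground states. $\mathcal{S}:=\operatorname{argmin}_\Omega\mathbb{H}$, $\overline{\Phi}:=\max_{s,s'\in\mathcal{S}}\Phi(s,s')$, and $\overline{\Omega}:=\{\eta:\Phi(\mathcal{S},\eta)\le\overline{\Phi}\}$. Sets. For $\mathcal{A}\subseteq\Omega$: $\mathcal{F}(\mathcal{A}):=\operatorname{argmin}_{\mathcal{A}}\mathbb{H}$; $\partial\mathcal{A}:=\{\eta\notin\mathcal{A}:\eta\sim\xi\text{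 for some }\xi\in\mathcal{A}\}$; $\partial^\star\mathcal{A}:=\mathcal{F}(\partial\mathcal{A})$. A set is connected if any two of its points are joined by a path inside it. Stable plateaux and cycles. A stable plateau is a nonempty connected set $\mathcal{P}$ with constant energy $\mathbb{H}(\mathcal{P})$ such that $\mathbb{H}>\mathbb{H}(\mathcal{P})$ on $\partial\mathcal{P}$. A cycle is a nonempty connected $\mathcal{C}$ with $\max_{\mathcal{C}}\mathbb{H}<\min_{\partial\mathcal{C}}\mathbb{H}$. Its depth is $\Gamma^{\mathcal{C}}:=\min_{\partial\mathcal{C}}\mathbb{H}-\min_{\mathcal{C}}\mathbb{H}$. General construction (C). Let $\mathscr{C}$ be a collection of pairwise disjoint cycles contained in $\overline{\Omega}$ with $|\mathscr{C}|\ge2$, and let $\Gamma^\star>0$. Put - $\mathscr{C}^\star:=\{\mathcal{C}\in\mathscr{C}:\Gamma^{\mathcal{C}}\ge\Gamma^\star\}$ and $\mathscr{C}^\sharp:=\{\mathcal{C}\in\mathscr{C}:\Gamma^{\mathcal{C}}<\Gamma^\star\}$; - $\mathscr{P}^{\mathscr{C}}:=\{\mathcal{F}(\mathcal{C}):\mathcal{C}\in\mathscr{C}\}$ and $\mathscr{P}^{\mathscr{C}^\star}:=\{\mathcal{F}(\mathcal{C}):\mathcal{C}\in\mathscr{C}^\star\}$; - $\Delta^{\mathscr{C}}:=\overline{\Omega}\setminus\bigcup_{\mathcal{C}\in\mathscr{C}}\mathcal{C}$. Let $\mathfrak{X}^{\mathscr{C}}$ be the continuous-time Markov chain on $\Omega^{\mathscr{C}}:=\Delta^{\mathscr{C}}\cup\mathscr{P}^{\mathscr{C}}$,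 in which each $\mathcal{F}(\mathcal{C})$ is treated as a single point. Its rates are: - $\mathfrak{R}^{\mathscr{C}}(\eta,\xi)=1$ for $\eta,\xi\in\Delta^{\mathscr{C}}$ with $\eta\sim\xi$ and $\mathbb{H}(\xi)\le\mathbb{H}(\eta)$; - $\mathfrak{R}^{\mathscr{C}}(\eta,\mathcal{F}(\mathcal{C}))=|\{\zeta\in\mathcal{C}:\eta\sim\zeta\}|$ for $\eta\in\Delta^{\mathscr{C}}\cap\partial\mathcal{C}$; - $\mathfrak{R}^{\mathscr{C}}(\mathcal{F}(\mathcal{C}),\eta)=|\mathcal{F}(\mathcal{C})|^{-1}|\{\zeta\in\mathcal{C}:\eta\sim\zeta\}|$ if $\Gamma^{\mathcal{C}}\le\Gamma^\star$ and $\eta\in\partial^\star\mathcal{C}$; - all other rates are $0$. The trace chain $\mathfrak{X}^{\mathscr{C}^\star}$ on $\mathscr{P}^{\mathscr{C}^\star}$ has rates, for distinct $\mathcal{C},\mathcal{C}'\in\mathscr{C}^\star$, $$\mathfrak{R}^{\mathscr{C}^\star}(\mathcal{F}(\mathcal{C}),\mathcal{F}(\mathcal{C}')):=\sum_{\eta\in\Delta^{\mathscr{C}}}\mathfrak{R}^{\mathscr{C}}(\mathcal{F}(\mathcal{C}),\eta)\,\mathbf{P}^{\mathscr{C}}_\eta[\mathcal{T}_{\mathcal{F}(\mathcal{C}')}=\mathcal{T}_{\mathscr{P}^{\mathscr{C}^\star}}].$$ Here $\mathbf{P}^{\mathscr{C}}_\eta$ is the law of $\mathfrak{X}^{\mathscr{C}}$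 started at $\eta$, and $\mathcal{T}_{\mathcal{A}}$ is the hitting time of $\mathcal{A}$. Hierarchy. Let $\mathscr{P}^1=\{\mathcal{P}_1^1,\dots,\mathcal{P}^1_{\nu_0}\}$ be the collection of all stable plateaux contained in $\overline{\Omega}$, and assume $\nu_0\ge2$. Suppose that at some level $\mathfrak{h}\ge1$ the sets $\mathcal{P}^{\mathfrak{h}}_1,\dots,\mathcal{P}^{\mathfrak{h}}_{\nu_{\mathfrak{h}-1}}$ are defined, with $\nu_{\mathfrak{h}-1}\ge2$. Then define: - $\mathbb{H}(\mathcal{P}^{\mathfrak{h}}_i):=\min_{\mathcal{P}^{\mathfrak{h}}_i}\mathbb{H}$; - $\mathscr{P}^{\star,\mathfrak{h}}:=\{\mathcal{P}^{\mathfrak{h}}_i:i\in[1,\nu_{\mathfrak{h}-1}]\}$; - $\breve{\mathcal{P}}^{\mathfrak{h}}_i:=\bigcup_{j\ne i}\mathcal{P}^{\mathfrak{h}}_j$; - $\Gamma^{\mathfrak{h}}_i:=\Phi(\mathcal{P}^{\mathfrak{h}}_i,\breve{\mathcal{P}}^{\mathfrak{h}}_i)-\mathbb{H}(\mathcal{P}^{\mathfrak{h}}_i)$ and $\Gamma^{\star,\mathfrak{h}}:=\min_i\Gamma_i^{\mathfrak{h}}$; - $\mathcal{V}^{\mathfrak{h}}_i:=\{\eta\in\Omega:\Phi(\mathcal{P}^{\mathfrak{h}}_i,\eta)-\mathbb{H}(\mathcal{P}^{\mathfrak{h}}_i)<\Gamma^{\mathfrak{h}}_i\}$. Set $\mathscr{C}^1:=\{\mathcal{V}^1_i:i\in[1,\nu_0]\}$.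 For $\mathfrak{h}\ge2$, set $$\mathscr{C}^{\mathfrak{h}}:=\{\mathcal{V}^{\mathfrak{h}}_i:i\in[1,\nu_{\mathfrak{h}-1}]\}\cup\{\mathcal{C}\in\mathscr{C}^{\star,\mathfrak{h}-1}_{\rm tr}\cup\mathscr{C}^{\sharp,\mathfrak{h}-1}:\mathcal{C}\cap\mathcal{V}^{\mathfrak{h}}_i=\emptyset\ \forall i\}.$$ Apply (C) to $(\mathscr{C}^{\mathfrak{h}},\Gamma^{\star,\mathfrak{h}})$. Write $\mathscr{C}^{\star,\mathfrak{h}}:=(\mathscr{C}^{\mathfrak{h}})^\star$ and $\mathscr{C}^{\sharp,\mathfrak{h}}:=(\mathscr{C}^{\mathfrak{h}})^\sharp$. Let $\mathfrak{X}^{\star,\mathfrak{h}}$ be the trace chain of (C) on $\mathscr{P}^{(\mathscr{C}^{\mathfrak{h}})^\star}$. Decompose $\mathscr{P}^{(\mathscr{C}^{\mathfrak{h}})^\star}$ into the closed communicating classes $\mathscr{P}^{\star,\mathfrak{h}}_1,\dots,\mathscr{P}^{\star,\mathfrak{h}}_{\nu_{\mathfrak{h}}}$ of $\mathfrak{X}^{\star,\mathfrak{h}}$ and the set $\mathscr{P}^{\star,\mathfrak{h}}_{\rm tr}$ of transient elements. Let $\mathscr{C}^{\star,\mathfrak{h}}_m:=\{\mathcal{C}\in\mathscr{C}^{\star,\mathfrak{h}}:\mathcal{F}(\mathcal{C})\in\mathscr{P}^{\star,\mathfrak{h}}_m\}$ for $m\in\{1,\dots,\nu_{\mathfrak{h}},{\rm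 tr}\}$. If $\nu_{\mathfrak{h}}\ge2$, define $\mathcal{P}^{\mathfrak{h}+1}_i:=\bigcup_{\mathcal{P}\in\mathscr{P}^{\star,\mathfrak{h}}_i}\mathcal{P}$ for $i\in[1,\nu_{\mathfrak{h}}]$ and continue to level $\mathfrak{h}+1$. The terminal level $\mathfrak{m}$ is the first $\mathfrak{h}$ with $\nu_{\mathfrak{h}}=1$. Finally, $\mathscr{P}^{\star,\mathfrak{h}}_{\rm rec}:=\mathscr{P}^{\star,\mathfrak{h}}_1\cup\dots\cup\mathscr{P}^{\star,\mathfrak{h}}_{\nu_{\mathfrak{h}}}$. Here $[a,b]$ denotes the set of integers from $a$ to $b$. *)

From HB Require Import structures.
From mathcomp Require Import all_boot all_order all_algebra.
From mathcomp Require Import all_classical all_reals all_analysis.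
Set Implicit Arguments. Unset Strict Implicit. Unset Printing Implicit Defensive.
Import Order.TTheory GRing.Theory Num.Theory.
Import numFieldNormedType.Exports.
Local Open Scope ring_scope.

Section Hierarchy.
Variables (R : realType) (T : finType) (adj : rel T) (H : T -> R).

Definition is_path (x : T) (s : seq T) (y : T) : bool :=
  path adj x s && (last x s == y).
Definition height (x : T) (s : seq T) : R := \big[Num.max/H x]_(z <- s) H z.
(* Phi(x,y) = min over paths x -> y of the height (written as inf; attained). *)
Definition Phi (x y : T) : R :=
  inf [set height x s | s in [set s | is_path x s y]].
Definition PhiS (A B : {set T}) : R :=
  inf [set Phi ab.1 ab.2 | ab in [set ab : T * T | (ab.1 \in A) /\ (ab.2 \in B)]].

Definition ground : {set T} := [set x | [forall y, H x <= H y]].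
Definition PhiBar : R :=
  sup [set Phi ab.1 ab.2 | ab in [set ab : T * T | (ab.1 \in ground) /\ (ab.2 \in ground)]].
Definition OmegaBar : {set T} := [set x | PhiS ground [set x] <= PhiBar].

Definition Fmin (A : {set T}) : {set T} := [set x in A | [forall y in A, H x <= H y]].
Definition bdry (A : {set T}) : {set T} := [set x | (x \notin A) && [exists y in A, adj x y]].
Definition bdry_star (A : {set T}) : {set T} := Fmin (bdry A).
Definition set_connected (A : {set T}) : bool :=
  [forall x in A, forall y in A, connect [rel a b | adj a b && (b \in A)] x y].
Definition minH (A : {set T}) : R := inf [set H x | x in [set x | x \in A]].

Definition stable_plateau (P : {set T}) : bool :=
  [&& P != finset.set0, set_connected P,
      [forall x in P, forall y in P, H x == H y] &
      [forall x in bdry P, forall y in P, H y < H x]].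
Definition is_cycle (C : {set T}) : bool :=
  [&& C != finset.set0, set_connected C &
      [forall x in C, forall y in bdry C, H x < H y]].
Definition depth (C : {set T}) : R := minH (bdry C) - minH C.

(* States of X^C: inl x for x in Delta^C, inr C standing for the point F(C). *)
Definition state := (T + {set T})%type.

Section Construction.
Variables (Cs : {set {set T}}) (Gs : R).

Definition Cstar : {set {set T}} := [set C in Cs | Gs <= depth C].
Definition Csharp : {set {set T}} := [set C in Cs | depth C < Gs].
Definition Delta : {set T} := OmegaBar :\: \bigcup_(C in Cs) C.

Definition nbC (C : {set T}) (x : T) : nat := #|[set z in C | adj x z]|.

Definition rateC (u v : state) : R :=
  match u, v with
  | inl x, inl y =>
      if [&& x \in Delta, y \in Delta, x != y, adj x y & H y <= H x] then 1 else 0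
  | inl x, inr C =>
      if [&& x \in Delta, C \in Cs & x \in bdry C] then (nbC C x)%:R else 0
  | inr C, inl y =>
      if [&& C \in Cs, depth C <= Gs, y \in Delta & y \in bdry_star C]
      then (nbC C y)%:R / (#|Fmin C|)%:R else 0
  | inr _, inr _ => 0
  end.

Definition total_rate (u : state) : R := \sum_(v : state) rateC u v.
Definition jump (u v : state) : R :=
  if 0 < total_rate u then rateC u v / total_rate u else 0.

(* hp n u = P_u[ the set B is hit within n jumps, and first at a point of A ] *)
Fixpoint hp (A B : pred state) (n : nat) (u : state) : R :=
  match n with
  | 0 => if A u then 1 else 0
  | n'.+1 => if A u then 1 else if B u then 0
             else \sum_(v : state) jump u v * hp A B n' v
  end.
(* P_u[T_A = T_B < oo] for A subset of B *)
Definition hitprob (A B : pred state) (u : state) : R := limn (fun n => hp A B n u).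

Definition Pstar : pred state :=
  fun u => if u is inr C then C \in Cstar else false.

(* rates of the trace chain on P^{Cstar}, indexed by the cycles of Cstar *)
Definition trace_rate (C C' : {set T}) : R :=
  \sum_(x in Delta) rateC (inr C) (inl x) *
     hitprob (fun u => u == inr C') Pstar (inl x).

Definition trace_edge : rel {set T} :=
  [rel C C' | [&& C \in Cstar, C' \in Cstar, C != C' & 0 < trace_rate C C']].
Definition communicate (C C' : {set T}) : bool :=
  connect trace_edge C C' && connect trace_edge C' C.
Definition comm_class (C : {set T}) : {set {set T}} :=
  [set C' in Cstar | communicate C C'].
Definition closed_class (K : {set {set T}}) : bool :=
  [forall C in K, forall C' in Cstar, trace_edge C C' ==> (C' \in K)].
Definition closed_classes : {set {set {set T}}} :=
  [set K | [exists C in Cstar, (K == comm_class C) && closed_class K]].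
Definition Cstar_tr : {set {set T}} :=
  [set C in Cstar | [forall K in closed_classes, C \notin K]].

End Construction.

(* A level input: plateaux P^h_i, and previous Cstar_tr union Csharp of level h-1 *)
Section Level.
Variables (Ps : {set {set T}}) (prev : {set {set T}}).

Definition Gam (P : {set T}) : R :=
  PhiS P (\bigcup_(Q in Ps | Q != P) Q) - minH P.
Definition Gstar : R := inf [set Gam P | P in [set P | P \in Ps]].
Definition Vset (P : {set T}) : {set T} := [set x | PhiS P [set x] - minH P < Gam P].
Definition level_cycles : {set {set T}} :=
  [set Vset P | P in Ps] :|:
  [set C in prev | [forall P in Ps, [disjoint C & Vset P]]].
Definition level_classes : {set {set {set T}}} := closed_classes level_cycles Gstar.
Definition next_level : {set {set T}} * {set {set T}} :=
  ([set \bigcup_(C in K) Fmin C | K : {set {set T}} in level_classes],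
   Cstar_tr level_cycles Gstar :|: Csharp level_cycles Gstar).
End Level.

Definition plateaux1 : {set {set T}} :=
  [set P | stable_plateau P && (P \subset OmegaBar)].

(* input of level h, for h >= 1 (input 0 is unused and equals input 1) *)
Definition level_input (h : nat) : {set {set T}} * {set {set T}} :=
  iter h.-1 (fun p => next_level p.1 p.2) (plateaux1, finset.set0).

Definition classes_at (h : nat) : {set {set {set T}}} :=
  level_classes (level_input h).1 (level_input h).2.

Definition nu (h : nat) : nat := if h is 0 then #|plateaux1| else #|classes_at h|.

End Hierarchy.

From Pilot Require Import Defs.
From HB Require Import structures.
From mathcomp Require Import all_boot all_order all_algebra.
From mathcomp Require Import all_classical all_reals all_analysis.
Import Order.TTheory GRing.Theory Num.Theory.
From mathcomp Require Import lra.
Local Open Scope ring_scope.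
Set Implicit Arguments. Unset Strict Implicit. Unset Printing Implicit Defensive.

(* At every level of the hierarchy the basins [V P] of the current plateaux
   are pairwise disjoint cycles whose depth is at least the barrier [Gam P >=
   Gstar], so every ground state lies in a cycle of [Cstar].  Along an edge of
   the trace chain the bottom energy of the cycles cannot increase, and an edge
   keeping it constant can be reversed: the chain then only visits states of one
   common height, where the rates of (C) are symmetric.  Hence the class of a
   cycle containing a ground state is closed and all its cycles have the ground
   energy as bottom.  Disjointness, positivity of the barriers and the covering
   of the ground states pass from one level to the next, so at the terminal
   level the unique closed class is that of the ground states, and the union of
   its bottoms is exactly the set of ground states. *)

Section FiniteExtrema.
Variable R : realType.
Local Open Scope classical_set_scope.

Lemma inf_finite_range (I : finType) (g : I -> R) (E : set R) :
  E !=set0 -> E `<=` range g ->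
  exists i, [/\ E (g i), inf E = g i & forall e, E e -> g i <= e].
Proof.
move=> [e0 Ee0] Eg; have [i0 _ gi0] := Eg _ Ee0.
have Pi0 : `[< E (g i0) >] by apply/asboolP; rewrite gi0.
case: (@arg_minP _ _ _ i0 (fun i => `[< E (g i) >]) g Pi0) => i /asboolP Ei imin.
have lb e : E e -> g i <= e.
  by move=> Ee; have [j _ gj] := Eg _ Ee; rewrite -gj; apply: imin; apply/asboolP; rewrite gj.
exists i; split => //; apply/eqP; rewrite eq_le; apply/andP; split.
  by apply: ge_inf => //; exists (g i) => e Ee; exact: lb.
by apply: lb_le_inf; [exists e0 | move=> e Ee; exact: lb].
Qed.

Lemma sup_finite_range_ge (I : finType) (g : I -> R) (E : set R) e :
  E `<=` range g -> E e -> e <= sup E.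
Proof.
move=> Eg Ee; have [i0 _ _] := Eg _ Ee.
case: (@arg_maxP _ _ _ i0 xpredT g erefl) => i _ imax.
apply: ub_le_sup => //; exists (g i) => x Ex.
by have [j _ <-] := Eg _ Ex; exact: imax.
Qed.

Lemma inf_image_min (I : finType) (g : I -> R) (S : set I) i0 : S i0 ->
  exists i, [/\ S i, inf [set g j | j in S] = g i & forall j, S j -> g i <= g j].
Proof.
move=> Si0; have E0 : [set g j | j in S] !=set0 by exists (g i0), i0.
have Er : [set g j | j in S] `<=` range g by move=> r [j _ <-]; exists j.
have [_ [[i Si <-] infE lb]] := inf_finite_range E0 Er.
by exists i; split => // j Sj; apply: lb; exists j.
Qed.

Lemma inf_image_le (I : finType) (g : I -> R) (S : set I) i :
  S i -> inf [set g j | j in S] <= g i.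
Proof. by move=> Si; have [j [_ -> lb]] := inf_image_min g Si; exact: lb. Qed.

Lemma inf_image_attained (I : finType) (g : I -> R) (S : set I) i0 :
  S i0 -> exists2 i, S i & inf [set g j | j in S] = g i.
Proof. by move=> Si0; have [i [Si e _]] := inf_image_min g Si0; exists i. Qed.

Lemma ler_sum_term (I : finType) (P : pred I) (F : I -> R) j :
  P j -> (forall i, P i -> 0 <= F i) -> F j <= \sum_(i | P i) F i.
Proof.
move=> Pj F0; rewrite (bigD1 j) //= lerDl.
by apply: sumr_ge0 => i /andP[Pi _]; exact: F0.
Qed.

End FiniteExtrema.

Section FiniteSets.
Variable I : finType.

Lemma trivIset_uniqP (F : {set {set I}}) :
  reflect (forall A B x, A \in F -> B \in F -> x \in A -> x \in B -> A = B)
          (finset.trivIset F).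
Proof.
apply: (iffP finset.trivIsetP) => [tI A B x AF BF xA xB | uF A B AF BF AB].
  apply/eqP; apply: contraT => AB.
  by rewrite (disjointFr (tI _ _ AF BF AB) xA) in xB.
apply/pred0P => x /=; apply/negP => /andP[xA xB].
by rewrite (uF _ _ _ AF BF xA xB) eqxx in AB.
Qed.

Lemma nonempty_mem (F : {set {set I}}) A :
  finset.set0 \notin F -> A \in F -> exists x, x \in A.
Proof. by move=> F0 AF; apply/finset.set0Pn; apply: contraNneq F0 => <-. Qed.

Lemma card_gt1_other (A : {set I}) a :
  (1 < #|A|)%N -> a \in A -> exists2 b, b \in A & b != a.
Proof.
move=> two aA; move: two; rewrite (cardsD1 a) aA add1n ltnS card_gt0.
by case/finset.set0Pn => b; rewrite in_setD1 => /andP[ba bA]; exists b.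
Qed.

Lemma connect_last_step (e : rel I) u v :
  connect e u v -> u != v -> exists w, e w v.
Proof.
move=> /connectP [p pp ->]; case/lastP: p pp => [|p z] /=; first by rewrite eqxx.
by rewrite rcons_path last_rcons => /andP[_ ezl] _; exists (last u p).
Qed.

End FiniteSets.

Section Landscape.
Variables (R : realType) (T : finType) (adj : rel T) (H : T -> R).
Hypothesis adj_sym : symmetric adj.
Hypothesis adj_conn : forall x y : T, connect adj x y.
Implicit Types (C D P Q : {set T}) (p q : T).

Local Notation Phi := (Phi adj H).
Local Notation PhiS := (PhiS adj H).
Local Notation height := (height H).
Local Notation minH := (minH H).
Local Notation Fmin := (Fmin H).
Local Notation bdry := (bdry adj).
Local Notation ground := (ground H).
Local Notation depth := (depth adj H).
Local Notation Others Ps P := (\bigcup_(Q in Ps | Q != P) Q).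

(** * Communication heights *)

Definition reach_below (t : R) (x y : T) :=
  exists2 s, is_path adj x s y & all (fun z => H z <= t) (x :: s).

Lemma height_le t x s : (height x s <= t) = all (fun z => H z <= t) (x :: s).
Proof.
rewrite /Defs.height; elim: s => [|a s IH]; first by rewrite big_nil /= andbT.
by rewrite big_cons ge_max IH /= andbCA.
Qed.

Lemma height_attained x s : exists z, height x s = H z.
Proof.
rewrite /Defs.height; elim: s => [|a s [z IH]]; first by rewrite big_nil; exists x.
by rewrite big_cons IH; case: (leP (H a) (H z)) => _; [exists z | exists a].
Qed.

Lemma Phi_le_reach t x y : Phi x y <= t <-> reach_below t x y.
Proof.
set E := [set height x s | s in [set s | is_path adj x s y]]%classic.
have E0 : (E !=set0)%classic.
  have /connectP [p pp lp] := adj_conn x y.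
  by exists (height x p); exists p => //; rewrite /mkset /Defs.is_path pp -lp eqxx.
have Er : (E `<=` range H)%classic.
  by move=> r [s _ <-]; have [z ->] := height_attained x s; exists z.
have [_ [[s ps <-] infE lb]] := inf_finite_range E0 Er.
rewrite /Defs.Phi -/E infE; split; first by rewrite height_le; exists s.
move=> [s' ps' alls'].
by apply: le_trans (lb (height x s') _) _; [exists s' | rewrite height_le].
Qed.

Lemma reach_below_Phi x y : reach_below (Phi x y) x y.
Proof. exact/Phi_le_reach. Qed.

Lemma reach_below_mono t t' x y : t <= t' -> reach_below t x y -> reach_below t' x y.
Proof.
move=> tt' [s ps a]; exists s => //.
by apply/allP => z /(allP a) /le_trans; apply.
Qed.

Lemma reach_below_ends t x y : reach_below t x y -> H x <= t /\ H y <= t.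
Proof.
move=> [s /andP[_ /eqP <-] /allP a]; split; first by apply: a; rewrite inE eqxx.
by apply: a; exact: mem_last.
Qed.

Lemma Phi_ge_ends x y : H x <= Phi x y /\ H y <= Phi x y.
Proof. exact: reach_below_ends (reach_below_Phi x y). Qed.

Lemma reach_below_sym t x y : reach_below t x y -> reach_below t y x.
Proof.
move=> [s /andP[ps /eqP ly] a].
have E : rev (x :: s) = y :: rev (belast x s) by rewrite lastI rev_rcons ly.
exists (rev (belast x s)); last by rewrite -E all_rev.
apply/andP; split.
  by rewrite -ly rev_path; apply: sub_path ps => u v /=; rewrite adj_sym.
by rewrite -[last y _](last_cons y y) -E rev_cons last_rcons.
Qed.

Lemma Phi_sym x y : Phi x y = Phi y x.
Proof.
by apply/eqP; rewrite eq_le; apply/andP; split;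
  apply/Phi_le_reach/reach_below_sym/reach_below_Phi.
Qed.

Lemma reach_below_trans t x y z :
  reach_below t x y -> reach_below t y z -> reach_below t x z.
Proof.
move=> [s /andP[ps /eqP ly] a] [s' /andP[ps' /eqP lz] /andP[_ a']].
exists (s ++ s'); first by rewrite /Defs.is_path cat_path ps last_cat ly ps' lz eqxx.
by rewrite -cat_cons all_cat a.
Qed.

Lemma Phi_ultra x y z : Phi x z <= Num.max (Phi x y) (Phi y z).
Proof.
apply/Phi_le_reach; apply: reach_below_trans.
  by apply: reach_below_mono (reach_below_Phi x y); rewrite le_max lexx.
by apply: reach_below_mono (reach_below_Phi y z); rewrite le_max lexx orbT.
Qed.

Lemma Phi_refl x : Phi x x <= H x.
Proof. by apply/Phi_le_reach; exists [::]; rewrite /Defs.is_path /= ?eqxx ?lexx. Qed.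

Lemma Phi_adj x y : adj x y -> Phi x y <= Num.max (H x) (H y).
Proof.
move=> axy; apply/Phi_le_reach; exists [:: y]; first by rewrite /Defs.is_path /= axy eqxx.
by rewrite /= !le_max !lexx orbT.
Qed.

Lemma reach_below_bdry t x y (A : {set T}) :
  reach_below t x y -> x \in A -> y \notin A -> exists2 b, b \in bdry A & H b <= t.
Proof.
move=> [s /andP[ps /eqP ly] a]; elim: s x ps ly a => [|c s IH] x /=.
  by move=> _ -> _ ->.
move=> /andP[axc ps] ly /andP[hx a] xA yA.
case cA: (c \in A); first exact: IH ps ly a cA yA.
exists c; last by case/andP: a.
rewrite inE cA /=; apply/existsP; exists x; by rewrite xA adj_sym.
Qed.

Lemma PhiS_le (A B : {set T}) a b : a \in A -> b \in B -> PhiS A B <= Phi a b.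
Proof.
move=> aA bB; exact: (@inf_image_le _ (T * T)%type (fun ab => Phi ab.1 ab.2)
  [set ab | (ab.1 \in A) /\ (ab.2 \in B)]%classic (a, b) (conj aA bB)).
Qed.

Lemma PhiS_attained (A B : {set T}) a b : a \in A -> b \in B ->
  exists a' b', [/\ a' \in A, b' \in B & PhiS A B = Phi a' b'].
Proof.
move=> aA bB; have [[a' b'] [/= ? ?] e] := @inf_image_attained _ (T * T)%type
  (fun ab => Phi ab.1 ab.2) [set ab | (ab.1 \in A) /\ (ab.2 \in B)]%classic (a, b) (conj aA bB).
by exists a', b'.
Qed.

Lemma minH_le (A : {set T}) x : x \in A -> minH A <= H x.
Proof. exact: (@inf_image_le _ T H [set x | x \in A]%classic x). Qed.

Lemma minH_attained (A : {set T}) x : x \in A -> exists2 y, y \in A & minH A = H y.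
Proof. exact: (@inf_image_attained _ T H [set x | x \in A]%classic x). Qed.

Lemma FminP (A : {set T}) x : x \in Fmin A -> x \in A /\ H x = minH A.
Proof.
rewrite inE => /andP[xA /forall_inP m]; split => //.
have [y yA e] := minH_attained xA; apply/eqP; rewrite eq_le e m //=.
by rewrite -e minH_le.
Qed.

Lemma mem_Fmin (A : {set T}) x : x \in A -> H x = minH A -> x \in Fmin A.
Proof. by move=> xA e; rewrite inE xA /=; apply/forall_inP => y yA; rewrite e minH_le. Qed.

Lemma Fmin_nonempty (A : {set T}) x : x \in A -> exists y, y \in Fmin A.
Proof. by move=> xA; have [y yA e] := minH_attained xA; exists y; apply: mem_Fmin. Qed.

Lemma groundP x : reflect (forall y, H x <= H y) (x \in ground).
Proof. by rewrite inE; apply: forallP. Qed.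

Lemma exists_ground (x : T) : exists g, g \in ground.
Proof.
case: (@arg_minP _ _ _ x xpredT H erefl) => g _ gmin.
by exists g; apply/groundP => y; exact: gmin.
Qed.

Lemma ground_H_eq x y : x \in ground -> y \in ground -> H x = H y.
Proof. by move=> /groundP hx /groundP hy; apply/eqP; rewrite eq_le hx hy. Qed.

Lemma minH_ground (A : {set T}) g : g \in ground -> g \in A -> minH A = H g.
Proof.
move=> /groundP gmin gA; apply/eqP; rewrite eq_le minH_le //=.
by have [y _ ->] := minH_attained gA.
Qed.

Lemma ground_Fmin (A : {set T}) g : g \in ground -> g \in A -> g \in Fmin A.
Proof. by move=> gG gA; apply: mem_Fmin => //; rewrite (minH_ground gG gA). Qed.

(** * The chain of construction (C) and its trace *)

Section ConstructionChain.
Variables (Cs : {set {set T}}) (Gs : R).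

Local Notation Delta := (Delta adj H Cs).
Local Notation rate := (rateC adj H Cs Gs).
Local Notation total := (total_rate adj H Cs Gs).
Local Notation jump := (jump adj H Cs Gs).
Local Notation hp := (hp adj H Cs Gs).
Local Notation hitprob := (hitprob adj H Cs Gs).
Local Notation Cst := (Cstar adj H Cs Gs).
Local Notation Pst := (Pstar adj H Cs Gs).
Local Notation tedge := (trace_edge adj H Cs Gs).
Local Notation at_cycle C := (fun u : state T => u == inr C).

Lemma rate_ge0 u v : 0 <= rate u v.
Proof.
case: u => [x|C]; case: v => [y|D] /=; do ?case: ifP => _;
  by rewrite ?ler01 ?ler0n ?lexx ?divr_ge0 ?ler0n.
Qed.

Lemma jump_ge0 u v : 0 <= jump u v.
Proof.
rewrite /Defs.jump; case: ifP => tp; last exact: lexx.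
by rewrite divr_ge0 ?rate_ge0 ?ltW.
Qed.

Lemma jump_gt0 u v : (0 < jump u v) = (0 < rate u v).
Proof.
apply/idP/idP => [|r].
  rewrite /Defs.jump; case: ifP => tp; last by rewrite ltxx.
  by rewrite pmulr_lgt0 // invr_gt0.
have tp : 0 < total u.
  by apply: lt_le_trans r (ler_sum_term (P := xpredT) _ _) => // w _; exact: rate_ge0.
by rewrite /Defs.jump tp divr_gt0.
Qed.

Lemma sum_jump_le1 u : \sum_v jump u v <= 1.
Proof.
have [tp|tp] := boolP (0 < total u).
  under eq_bigr => v _ do rewrite /Defs.jump tp.
  by rewrite -big_distrl /= -/(total_rate _ _ _ _ _) mulfV ?gt_eqF.
under eq_bigr => v _ do rewrite /Defs.jump (negbTE tp).
by rewrite big1 ?ler01.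
Qed.

Lemma hp_ge0 A B n u : 0 <= hp A B n u.
Proof.
elim: n u => [|n IH] u /=; first by case: (A u); rewrite ?ler01 ?lexx.
case: (A u); first exact: ler01; case: (B u); first exact: lexx.
by apply: sumr_ge0 => v _; rewrite mulr_ge0 ?jump_ge0.
Qed.

Lemma hp_le1 A B n u : hp A B n u <= 1.
Proof.
elim: n u => [|n IH] u /=; first by case: (A u); rewrite ?ler01 ?lexx.
case: (A u); first exact: lexx; case: (B u); first exact: ler01.
apply: le_trans (sum_jump_le1 u); apply: ler_sum => v _.
by rewrite ler_piMr ?jump_ge0.
Qed.

Lemma hp_nondecreasing A B u : nondecreasing_seq (fun n => hp A B n u).
Proof.
apply/nondecreasing_seqP => n; elim: n u => [|n IH] u.
  rewrite /=; case: (A u) => //; case: (B u) => //.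
  by apply: sumr_ge0 => v _; rewrite mulr_ge0 ?jump_ge0 //; case: (A v).
rewrite [hp A B n.+1 u]/= [hp A B n.+2 u]/=; case: (A u) => //; case: (B u) => //.
by apply: ler_sum => v _; rewrite ler_wpM2l ?jump_ge0.
Qed.

Lemma hp_le_hitprob A B n u : hp A B n u <= hitprob A B u.
Proof.
apply: (nondecreasing_cvgn_le (hp_nondecreasing A B u)).
apply: nondecreasing_is_cvgn; first exact: hp_nondecreasing.
by exists 1 => r [k _ <-]; exact: hp_le1.
Qed.

Lemma hitprob_ge0 A B u : 0 <= hitprob A B u.
Proof. exact: le_trans (hp_ge0 A B 0 u) (hp_le_hitprob A B 0 u). Qed.

Definition free_step (A B : pred (state T)) : rel (state T) :=
  fun u v => [&& ~~ A u, ~~ B u & 0 < rate u v].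

Lemma hp_gt0_connect A B n u :
  0 < hp A B n u -> exists2 v, connect (free_step A B) u v & A v.
Proof.
elim: n u => [|n IH] u /=; first by case Au: (A u); [exists u | rewrite ltxx].
case Au: (A u); first by exists u.
case Bu: (B u); first by rewrite ltxx.
move=> pos; have [w /andP[_ pw]] : exists w, true && (0 < jump u w * hp A B n w).
  apply: psumr_neq0P => [v _|]; first by rewrite mulr_ge0 ?jump_ge0 ?hp_ge0.
  by apply/eqP; rewrite gt_eqF.
have jw : 0 < jump u w.
  by rewrite lt_def jump_ge0 andbT; apply: contraTneq pw => ->; rewrite mul0r ltxx.
have hw : 0 < hp A B n w by rewrite -(pmulr_rgt0 _ jw).
have [v wv Av] := IH w hw; exists v => //.
by apply: connect_trans wv; apply: connect1; rewrite /free_step Au Bu -jump_gt0.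
Qed.

Lemma connect_hp_gt0 A B u v :
  connect (free_step A B) u v -> A v -> exists n, 0 < hp A B n u.
Proof.
move=> /connectP [p pp ->]; elim: p u pp => [|w p IH] u /=.
  by move=> _ Au; exists 0%N; rewrite /= Au ltr01.
move=> /andP[/and3P[Au Bu ruw] pp] Al.
have [n hn] := IH w pp Al; exists n.+1; rewrite /= (negbTE Au) (negbTE Bu).
apply: lt_le_trans (@ler_sum_term _ _ xpredT (fun v => jump u v * hp A B n v) w isT _).
  by rewrite mulr_gt0 ?jump_gt0.
by move=> z _; rewrite mulr_ge0 ?jump_ge0 ?hp_ge0.
Qed.

Lemma hitprob_gt0_iff A B u :
  0 < hitprob A B u <-> exists2 v, connect (free_step A B) u v & A v.
Proof.
split=> [hpos | [v uv Av]]; last first.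
  by have [n hn] := connect_hp_gt0 uv Av; exact: lt_le_trans hn (hp_le_hitprob _ _ _ _).
have [n hn] : exists n, 0 < hp A B n u.
  apply: contrapT => nex; move: hpos; rewrite /Defs.hitprob.
  have -> : (fun n => hp A B n u) = (fun _ => 0).
    apply: funext => n; apply/eqP; rewrite eq_le hp_ge0 andbT leNgt.
    by apply/negP => h; apply: nex; exists n.
  by rewrite (_ : limn _ = 0) ?ltxx //; apply: lim_cst.
exact: hp_gt0_connect hn.
Qed.

(* The energy at which the chain sits in [u]: a cycle is entered and left
   through its lowest boundary points. *)
Definition state_height (u : state T) : R :=
  match u with inl x => H x | inr C => minH (bdry C) end.

Lemma state_height_rate u v : 0 < rate u v -> state_height v <= state_height u.
Proof.
case: u => [x|C]; case: v => [y|D] /=.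
- by case: ifP => [/and5P[_ _ _ _ ->] // | _]; rewrite ltxx.
- by case: ifP => [/and3P[_ _ xb] _ | _]; [exact: minH_le | rewrite ltxx].
- by case: ifP => [/and4P[_ _ _ /FminP[_ ->]] _ | _]; [exact: lexx | rewrite ltxx].
- by rewrite ltxx.
Qed.

Lemma state_height_connect A B u v :
  connect (free_step A B) u v -> state_height v <= state_height u.
Proof.
move=> /connectP [p pp ->]; elim: p u pp => [|w p IH] u /=; first by rewrite lexx.
by move=> /andP[/and3P[_ _ ruw] pp]; exact: le_trans (IH w pp) (state_height_rate ruw).
Qed.

Lemma rate_cycle_target z D : 0 < rate z (inr D) ->
  D \in Cs /\ exists y, [/\ z = inl y, y \in bdry D & y \in Delta].
Proof.
case: z => [y|C] /=; last by rewrite ltxx.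
by case: ifP => [/and3P[yD DC yb] _ | _]; [split => //; exists y | rewrite ltxx].
Qed.

(* The last hypothesis is needed because (C) never leaves a cycle deeper than
   [Gs]. *)
Lemma rate_reverse u v : 0 < rate u v -> state_height v = state_height u ->
  (forall D, v = inr D -> depth D <= Gs) -> 0 < rate v u.
Proof.
case: u => [x|C]; case: v => [y|D] /=.
- case: ifP => [/and5P[xD yD xy axy _] _ e _ | _]; last by rewrite ltxx.
  by rewrite yD xD eq_sym xy adj_sym axy e lexx ltr01.
- case: ifP => [/and3P[xD DC xb] np e dD | _]; last by rewrite ltxx.
  have xs : x \in bdry_star adj H D by apply: mem_Fmin => //; rewrite e.
  rewrite DC dD // xD xs /= divr_gt0 //.
  move: xb; rewrite inE => /andP[_ /exists_inP [z zD _]].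
  have [w wF] := Fmin_nonempty zD.
  by rewrite ltr0n card_gt0; apply/finset.set0Pn; exists w.
- case: ifP => [/and4P[DC dD yD /FminP[yb _]] np e _ | _]; last by rewrite ltxx.
  rewrite yD DC yb /=; move: np; apply: contraTT; rewrite -!leNgt => n0.
  by rewrite (_ : (nbC adj C y)%:R = 0) ?mul0r // ; apply/eqP; rewrite eq_le n0 ler0n.
- by rewrite ltxx.
Qed.

Lemma Cstar_cycle C : C \in Cst -> C \in Cs.
Proof. by rewrite inE => /andP[]. Qed.

Lemma Cstar_depth C : C \in Cst -> Gs <= depth C.
Proof. by rewrite inE => /andP[]. Qed.

Definition flat (L : R) (z : state T) := ~~ Pst z && (state_height z == L).

Definition flat_step (L : R) : rel (state T) :=
  fun z w => [&& flat L z, flat L w & 0 < rate z w].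

Lemma flat_step_sym L : symmetric (flat_step L).
Proof.
suff imp z w : flat_step L z w -> flat_step L w z by move=> z w; apply/idP/idP; apply: imp.
move=> /and3P[fz fw rzw]; rewrite /flat_step fz fw /=.
apply: (rate_reverse rzw); first by move: fz fw => /andP[_ /eqP ->] /andP[_ /eqP ->].
move=> D eD; subst w; move: fw => /andP[nD _]; have [DC _] := rate_cycle_target rzw.
by move: nD; rewrite /= inE DC /= -ltNge => /ltW.
Qed.

Lemma flat_connect_free A L u v : {subset A <= Pst} ->
  connect (flat_step L) u v -> connect (free_step A Pst) u v.
Proof.
move=> APst; apply: connect_sub => z z' /and3P[/andP[nz _] _ rz]; apply: connect1.
have nAz : ~~ A z by apply: contraNN nz; exact: APst.
by rewrite /free_step nAz nz rz.
Qed.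

Lemma flat_approach C' u (L := state_height (inr C')) :
  connect (free_step (at_cycle C') Pst) u (inr C') -> u != inr C' -> state_height u <= L ->
  exists w, [/\ flat L u, flat L w, connect (flat_step L) u w & 0 < rate w (inr C')].
Proof.
move=> /connectP [p]; elim: p u => [|w p IH] u /=; first by move=> _ ->; rewrite eqxx.
move=> /andP[/and3P[nAu nBu ruw] pw] lw nu lu.
have flat_u : flat L u.
  rewrite /flat nBu eq_le lu /=; apply: (@state_height_connect (at_cycle C') Pst).
  by apply/connectP; exists (w :: p) => //=; rewrite /free_step nAu nBu ruw.
case: (eqVneq w (inr C')) => [ew|nw]; first by exists u; rewrite -ew connect0.
have [w' [flat_w flat_w' cw rw]] := IH w pw lw nw (le_trans (state_height_rate ruw) lu).
exists w'; split => //; apply: connect_trans cw; apply: connect1.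
by rewrite /flat_step flat_u flat_w.
Qed.

Lemma trace_edge_intro C C' y : C \in Cst -> C' \in Cst -> C != C' -> y \in Delta ->
  0 < rate (inr C) (inl y) -> connect (free_step (at_cycle C') Pst) (inl y) (inr C') ->
  tedge C C'.
Proof.
move=> CC C'C CC' yD ry cy; rewrite /trace_edge /= CC C'C CC' /=.
have hy : 0 < hitprob (at_cycle C') Pst (inl y) by apply/hitprob_gt0_iff; exists (inr C').
apply: lt_le_trans (ler_sum_term (P := mem Delta) (F := fun x => rate (inr C) (inl x) *
  hitprob (at_cycle C') Pst (inl x)) yD _); first by rewrite mulr_gt0.
by move=> x _; rewrite mulr_ge0 ?rate_ge0 ?hitprob_ge0.
Qed.

Lemma trace_edge_witness C C' : tedge C C' -> exists x, [/\ depth C <= Gs,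
  H x = minH (bdry C), 0 < rate (inr C) (inl x) &
  connect (free_step (at_cycle C') Pst) (inl x) (inr C')].
Proof.
move=> /and4P[_ _ _ tr].
have [x /andP[_ px]] : exists x, (x \in Delta) &&
    (0 < rate (inr C) (inl x) * hitprob (at_cycle C') Pst (inl x)).
  apply: psumr_neq0P => [x _|]; first by rewrite mulr_ge0 ?rate_ge0 ?hitprob_ge0.
  by apply/eqP; rewrite gt_eqF.
have rx : 0 < rate (inr C) (inl x).
  by rewrite lt_def rate_ge0 andbT; apply: contraTneq px => ->; rewrite mul0r ltxx.
have /hitprob_gt0_iff [v cv /eqP ev] : 0 < hitprob (at_cycle C') Pst (inl x).
  by rewrite -(pmulr_rgt0 _ rx).
move: (rx) => /=; case: ifP => [/and4P[_ dC _ /FminP[_ Hx]] _ | _]; last by rewrite ltxx.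
by exists x; split => //; rewrite ev in cv.
Qed.

Lemma trace_edge_minH C C' : tedge C C' -> minH C' <= minH C.
Proof.
move=> e; have C'C : C' \in Cst by case/and4P: e.
have [x [dC Hx _ cx]] := trace_edge_witness e.
have := state_height_connect cx; rewrite /= Hx.
by move: dC (Cstar_depth C'C); rewrite /Defs.depth; lra.
Qed.

Lemma trace_edge_reverse C C' : tedge C C' -> minH C' = minH C -> tedge C' C.
Proof.
move=> e eqm; move: (e) => /and4P[CC C'C CC' _].
have [x [dC Hx rx cx]] := trace_edge_witness e.
have := state_height_connect cx; rewrite /= Hx => hC'.
have dC' := Cstar_depth C'C.
have eqb : state_height (inr C') = state_height (inl x).
  by rewrite /= Hx; move: dC dC' hC' eqm; rewrite /Defs.depth; lra.
have dC'le : depth C' <= Gs by move: dC dC' hC' eqm; rewrite /Defs.depth; lra.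
have hx : state_height (inl x) <= state_height (inr C') by rewrite eqb.
have [w0 [_ fw0 cxw0 rw0]] := flat_approach cx isT hx.
have [_ [y [ey _ yD]]] := rate_cycle_target rw0; subst w0.
have ry : 0 < rate (inr C') (inl y).
  by apply: (rate_reverse rw0) => [|D [<-] //]; move: fw0 => /andP[_ /eqP ->].
apply: (trace_edge_intro C'C CC _ yD ry); first by rewrite eq_sym.
have cyx : connect (flat_step (state_height (inr C'))) (inl y) (inl x).
  by rewrite (sym_connect_sym (@flat_step_sym _)).
apply: connect_trans (flat_connect_free _ cyx) (connect1 _); first by move=> u /eqP ->.
apply/and3P; split => //; apply: (rate_reverse rx) => [|D] //.
Qed.

Local Notation communicate := (communicate adj H Cs Gs).
Local Notation comm_class := (comm_class adj H Cs Gs).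
Local Notation classes := (closed_classes adj H Cs Gs).

Lemma connect_trace_edge_minH C D : connect tedge C D -> minH D <= minH C.
Proof.
move=> /connectP [p pp ->]; elim: p C pp => [|E p IH] C /=; first by rewrite lexx.
by move=> /andP[e pp]; exact: le_trans (IH E pp) (trace_edge_minH e).
Qed.

Lemma mem_comm_class C E : (E \in comm_class C) = (E \in Cst) && communicate C E.
Proof. by rewrite inE. Qed.

Lemma comm_class_self C : C \in Cst -> C \in comm_class C.
Proof. by move=> CC; rewrite mem_comm_class CC /communicate !connect0. Qed.

Lemma comm_class_eq C D : communicate C D -> comm_class C = comm_class D.
Proof.
move=> /andP[cCD cDC]; apply/setP => E; rewrite !mem_comm_class.
case: (E \in Cst) => //=; apply/andP/andP => [] [c1 c2]; split.
- exact: connect_trans cDC c1.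
- exact: connect_trans c2 cCD.
- exact: connect_trans cCD c1.
- exact: connect_trans c2 cDC.
Qed.

Lemma closed_class_mem K C :
  K \in classes -> C \in K -> C \in Cst /\ K = comm_class C.
Proof.
rewrite inE => /exists_inP [C0 _ /andP[/eqP -> _]].
by rewrite mem_comm_class => /andP[CC cm]; split => //; exact: comm_class_eq.
Qed.

Lemma closed_class_nonempty K : K \in classes -> exists C, C \in K.
Proof.
by rewrite inE => /exists_inP [C0 C0C /andP[/eqP -> _]]; exists C0; exact: comm_class_self.
Qed.

Lemma closed_class_uniq K K' C :
  K \in classes -> K' \in classes -> C \in K -> C \in K' -> K = K'.
Proof.
by move=> KC K'C CK CK'; rewrite (closed_class_mem KC CK).2 (closed_class_mem K'C CK').2.
Qed.

Lemma closed_class_minH K C D : K \in classes -> C \in K -> D \in K -> minH C = minH D.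
Proof.
move=> KC CK DK; have [_ eK] := closed_class_mem KC CK.
move: (DK) CK; rewrite eK !mem_comm_class => /andP[_ /andP[cCD cDC]] _.
by apply/eqP; rewrite eq_le !connect_trace_edge_minH.
Qed.

(* Trace edges never raise [minH], and an edge keeping it can be reversed; so
   no edge leaves the class of a cycle of minimal [minH]. *)
Lemma comm_class_minimal C : C \in Cst -> {in Cst, forall D, minH C <= minH D} ->
  comm_class C \in classes /\ {in comm_class C, forall D, minH D = minH C}.
Proof.
move=> CC Cmin.
have reach D : connect tedge C D -> minH D = minH C /\ connect tedge D C.
  move=> /connectP [p pp ->]; elim/last_ind: p pp => [|p E IH]; first by rewrite connect0.
  rewrite rcons_path last_rcons => /andP[pp e]; have [mL cL] := IH pp.
  have EC : E \in Cst by case/and4P: e.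
  have mE : minH E = minH (last C p).
    by apply/eqP; rewrite eq_le trace_edge_minH //= mL Cmin.
  rewrite mE mL; split => //.
  by apply: connect_trans (connect1 _) cL; exact: trace_edge_reverse.
split; last by move=> D; rewrite mem_comm_class => /andP[_ /andP[/reach []]].
rewrite inE; apply/exists_inP; exists C => //; rewrite eqxx /=.
apply/forall_inP => D; rewrite mem_comm_class => /andP[_ /andP[cCD _]].
apply/forall_inP => D' D'C; apply/implyP => e.
have cCD' : connect tedge C D' := connect_trans cCD (connect1 e).
by rewrite mem_comm_class D'C /communicate cCD' (reach _ cCD').2.
Qed.

End ConstructionChain.

(** * Invariants of the hierarchy *)

Lemma mem_others (Ps : {set {set T}}) P Q q :
  Q \in Ps -> Q != P -> q \in Q -> q \in Others Ps P.
Proof. by move=> QP QP' qQ; apply/bigcupP; exists Q; rewrite ?QP. Qed.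

Lemma Gam_gt0_barrier (Ps : {set {set T}}) (P : {set T}) p0 q0 :
  p0 \in P -> q0 \in Others Ps P ->
  (forall p q, p \in P -> q \in Others Ps P ->
     exists A : {set T}, [/\ p \in A, q \notin A & {in bdry A, forall b, minH P < H b}]) ->
  0 < Gam adj H Ps P.
Proof.
move=> p0P q0O barrier; have [p [q [pP qO e]]] := PhiS_attained p0P q0O.
have [A [pA qA Abar]] := barrier p q pP qO.
have [b bA hb] := reach_below_bdry (reach_below_Phi p q) pA qA.
by rewrite /Defs.Gam e subr_gt0; apply: lt_le_trans hb; exact: Abar.
Qed.

Record level_invariant (Ps prev : {set {set T}}) : Prop := LevelInvariant {
  plateaux_nonempty : finset.set0 \notin Ps;
  prev_trivIset : finset.trivIset prev;
  prev_nonempty : finset.set0 \notin prev;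
  plateaux_Gam_gt0 : {in Ps, forall P, 0 < Gam adj H Ps P};
  ground_covered : ground \subset finset.cover Ps;
  two_plateaux : (1 < #|Ps|)%N }.

Section Level.
Variables (Ps prev : {set {set T}}).
Hypothesis inv : level_invariant Ps prev.

Local Notation Gam := (Gam adj H Ps).
Local Notation Gs := (Gstar adj H Ps).
Local Notation V := (Vset adj H Ps).
Local Notation Cs := (level_cycles adj H Ps prev).
Local Notation Cst := (Cstar adj H Cs Gs).
Local Notation comm_class := (comm_class adj H Cs Gs).
Local Notation classes := (closed_classes adj H Cs Gs).
Local Notation U K := (\bigcup_(C in K) Fmin C).
Local Notation Ps' := (next_level adj H Ps prev).1.
Local Notation prev' := (next_level adj H Ps prev).2.

Lemma plateau_nonempty P : P \in Ps -> exists x, x \in P.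
Proof. exact: nonempty_mem (plateaux_nonempty inv). Qed.

Lemma ground_plateau g : g \in ground -> exists2 P, P \in Ps & g \in P.
Proof. by move=> /(fintype.subsetP (ground_covered inv)) /bigcupP. Qed.

Lemma others_nonempty P : P \in Ps -> exists q, q \in Others Ps P.
Proof.
move=> PP; have [Q QP QP'] := card_gt1_other (two_plateaux inv) PP.
by have [q qQ] := plateau_nonempty QP; exists q; exact: mem_others QP QP' qQ.
Qed.

Lemma Gstar_le P : P \in Ps -> Gs <= Gam P.
Proof. exact: (@inf_image_le _ _ Gam [set P | P \in Ps]%classic). Qed.

Lemma Gstar_gt0 : 0 < Gs.
Proof.
have [P PP] : exists P, P \in Ps.
  by apply/finset.set0Pn; rewrite -card_gt0 (ltnW (two_plateaux inv)).
rewrite /Defs.Gstar.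
have [Q QP ->] := @inf_image_attained _ _ Gam [set P | P \in Ps]%classic P PP.
exact: plateaux_Gam_gt0 inv Q QP.
Qed.

Lemma PhiS_set1 P x : P \in Ps -> exists2 p, p \in P & PhiS P [set x] = Phi p x.
Proof.
move=> PP; have [y yP] := plateau_nonempty PP.
have [p [x' [pP]]] := PhiS_attained yP (set11 x).
by rewrite inE => /eqP -> e; exists p.
Qed.

Lemma Gam_le P p q : p \in P -> q \in Others Ps P -> Gam P <= Phi p q - minH P.
Proof. by move=> pP qO; rewrite /Defs.Gam lerD2r PhiS_le. Qed.

Lemma mem_Vset P x : (x \in V P) = (PhiS P [set x] - minH P < Gam P).
Proof. by rewrite inE. Qed.

Lemma Vset_low P x : P \in Ps -> x \in P -> H x <= minH P -> x \in V P.
Proof.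
move=> PP xP hx; rewrite mem_Vset.
have := PhiS_le xP (set11 x); have := Phi_refl x; have := plateaux_Gam_gt0 inv PP.
lra.
Qed.

Lemma Vset_low_point P : P \in Ps -> exists2 m, m \in V P & H m = minH P.
Proof.
move=> PP; have [x xP] := plateau_nonempty PP; have [m /FminP [mP Hm]] := Fmin_nonempty xP.
by exists m => //; apply: Vset_low => //; rewrite Hm.
Qed.

Lemma Vset_others P q : P \in Ps -> q \in Others Ps P -> q \notin V P.
Proof.
move=> PP qO; rewrite mem_Vset -leNgt.
by have [p pP ->] := PhiS_set1 q PP; exact: Gam_le.
Qed.

(* Two basins meeting at [x] would give a path between the plateaux below
   both of their barriers. *)
Lemma Vset_uniq P Q x : P \in Ps -> Q \in Ps -> x \in V P -> x \in V Q -> P = Q.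
Proof.
move=> PP QP; have [//|PQ] := eqVneq P Q; rewrite !mem_Vset.
have [p pP ->] := PhiS_set1 x PP; have [q qQ ->] := PhiS_set1 x QP => hp hq.
have g2 := Gam_le qQ (mem_others PP PQ pP).
rewrite eq_sym in PQ; have g1 := Gam_le pP (mem_others QP PQ qQ).
have u := Phi_ultra p x q; rewrite le_max in u.
rewrite (Phi_sym q p) in g2; rewrite (Phi_sym q x) in hq.
by exfalso; case/orP: u => u; lra.
Qed.

(* A boundary point below the barrier would itself lie in [V P]. *)
Lemma Vset_bdry_ge P b : P \in Ps -> b \in bdry (V P) -> minH P + Gam P <= H b.
Proof.
move=> PP; rewrite inE => /andP[bV /exists_inP [z zV abz]].
move: zV; rewrite mem_Vset; have [p pP ->] := PhiS_set1 z PP => zV.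
rewrite leNgt; move: bV; apply: contraNN => hlt; rewrite mem_Vset.
have u1 := Phi_ultra p z b; rewrite (Phi_sym z b) le_max in u1.
have u2 := Phi_adj abz; rewrite le_max in u2.
have u3 := (Phi_ge_ends p z).2; have u4 := PhiS_le pP (set11 b).
by case/orP: u1 => u1; case/orP: u2 => u2; lra.
Qed.

Lemma Vset_depth_ge P : P \in Ps -> Gam P <= depth (V P).
Proof.
move=> PP; have [m mV Hm] := Vset_low_point PP; have [q qO] := others_nonempty PP.
have [b bB _] := reach_below_bdry (reach_below_Phi m q) mV (Vset_others PP qO).
rewrite /Defs.depth; have [b0 b0B ->] := minH_attained bB.
by have := Vset_bdry_ge PP b0B; have := minH_le mV; lra.
Qed.

Lemma Vset_Cstar P : P \in Ps -> V P \in Cst.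
Proof.
move=> PP; rewrite inE (le_trans (Gstar_le PP) (Vset_depth_ge PP)) andbT.
by rewrite finset.in_setU imset_f.
Qed.

Lemma mem_level_cycles C : C \in Cs ->
  (exists2 P, P \in Ps & C = V P) \/ (C \in prev /\ {in Ps, forall P, [disjoint C & V P]}).
Proof.
rewrite finset.in_setU => /orP[/imsetP [P PP ->]|]; first by left; exists P.
by rewrite inE => /andP[Cp /forall_inP dC]; right.
Qed.

Lemma level_cycles_nonempty : finset.set0 \notin Cs.
Proof.
apply/negP => /mem_level_cycles [[P PP eP] | [p0 _]].
  by have [m] := Vset_low_point PP; rewrite -eP inE.
by move: (prev_nonempty inv); rewrite p0.
Qed.

Lemma level_cycles_uniq C C' x : C \in Cs -> C' \in Cs -> x \in C -> x \in C' -> C = C'.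
Proof.
move=> /mem_level_cycles [[P PP ->]|[Cp dC]] /mem_level_cycles [[Q QP ->]|[C'p dC']].
- by move=> xP xQ; rewrite (Vset_uniq PP QP xP xQ).
- by move=> xV xC'; move: (disjointFl (dC' P PP) xV); rewrite xC'.
- by move=> xC xV; move: (disjointFl (dC Q QP) xV); rewrite xC.
- by have /trivIset_uniqP := prev_trivIset inv; apply.
Qed.

Lemma level_cycles_trivIset : finset.trivIset Cs.
Proof. by apply/trivIset_uniqP; exact: level_cycles_uniq. Qed.

Lemma ground_Cstar g : g \in ground -> exists2 C, C \in Cst & g \in C.
Proof.
move=> gG; have [P PP gP] := ground_plateau gG.
by exists (V P); [exact: Vset_Cstar | apply: Vset_low; rewrite ?(minH_ground gG gP)].
Qed.

Lemma ground_class g C : g \in ground -> C \in Cst -> g \in C ->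
  comm_class C \in classes /\ {in comm_class C, forall D, minH D = H g}.
Proof.
move=> gG CC gC; rewrite -(minH_ground gG gC); apply: comm_class_minimal => // D DC.
have [x xD] := nonempty_mem level_cycles_nonempty (Cstar_cycle DC).
by rewrite (minH_ground gG gC); have [y _ ->] := minH_attained xD; exact: groundP gG y.
Qed.

Lemma class_cover_nonempty K : K \in classes -> exists x, x \in U K.
Proof.
move=> KC; have [C CK] := closed_class_nonempty KC.
have [y yC] := nonempty_mem level_cycles_nonempty (Cstar_cycle (closed_class_mem KC CK).1).
by have [z zF] := Fmin_nonempty yC; exists z; apply/bigcupP; exists C.
Qed.

Lemma class_cover_uniq K K' x :
  K \in classes -> K' \in classes -> x \in U K -> x \in U K' -> K = K'.
Proof.
move=> KC K'C /bigcupP [C CK /FminP [xC _]] /bigcupP [C' C'K /FminP [xC' _]].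
have CC := Cstar_cycle (closed_class_mem KC CK).1.
have C'C := Cstar_cycle (closed_class_mem K'C C'K).1.
rewrite (level_cycles_uniq CC C'C xC xC') in CK.
exact: closed_class_uniq KC K'C CK C'K.
Qed.

Lemma class_cover_minH K C : K \in classes -> C \in K -> minH (U K) = minH C.
Proof.
move=> KC CK; have [x xU] := class_cover_nonempty KC; have [y yU ->] := minH_attained xU.
by move: yU => /bigcupP [C' C'K /FminP [_ ->]]; exact: closed_class_minH KC C'K CK.
Qed.

Lemma next_plateau_class P' : P' \in Ps' -> exists2 K, K \in classes & P' = U K.
Proof. by move=> /imsetP [K KC ->]; exists K. Qed.

Lemma card_next_plateaux : #|Ps'| = #|classes|.
Proof.
apply: card_in_imset => K K' KC K'C e.
have [x xK] := class_cover_nonempty KC.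
have xK' : x \in U K' by rewrite -e.
exact: class_cover_uniq KC K'C xK xK'.
Qed.

Lemma next_plateaux_nonempty : finset.set0 \notin Ps'.
Proof.
by apply/imsetP => -[K KC e]; have [x] := class_cover_nonempty KC; rewrite -e inE.
Qed.

Lemma next_prev_sub : prev' \subset Cs.
Proof.
apply/fintype.subsetP => C; rewrite finset.in_setU => /orP[|]; rewrite inE => /andP[] //.
by move=> /Cstar_cycle.
Qed.

Lemma next_Gam_gt0 : (1 < #|classes|)%N -> {in Ps', forall P', 0 < Defs.Gam adj H Ps' P'}.
Proof.
move=> two P' P'P; have [K KC eP] := next_plateau_class P'P.
have [Q' Q'P Q'P'] : exists2 Q', Q' \in Ps' & Q' != P'.
  by apply: card_gt1_other P'P; rewrite card_next_plateaux.
have [p0 p0P] : exists p, p \in P' by rewrite eP; exact: class_cover_nonempty.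
have [q0 q0Q] := nonempty_mem next_plateaux_nonempty Q'P.
apply: (Gam_gt0_barrier p0P (mem_others Q'P Q'P' q0Q)).
move=> p q; rewrite {1}eP => /bigcupP [C CK pC] /bigcupP [Q /andP[QP QP'] qQ].
have [K' K'C eQ] := next_plateau_class QP; move: qQ; rewrite eQ => /bigcupP [C' C'K qC'].
have CC := (closed_class_mem KC CK).1; have C'C := (closed_class_mem K'C C'K).1.
exists C; split; first exact: (FminP pC).1.
  apply/negP => qC.
  have eC := level_cycles_uniq (Cstar_cycle CC) (Cstar_cycle C'C) qC (FminP qC').1.
  rewrite -eC in C'K; move: QP'; rewrite eQ eP (closed_class_uniq K'C KC C'K CK).
  by rewrite eqxx.
move=> b bB; rewrite eP (class_cover_minH KC CK).
have := minH_le bB; have := Cstar_depth CC; have := Gstar_gt0.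
by rewrite /Defs.depth; lra.
Qed.

Lemma next_ground_covered : ground \subset finset.cover Ps'.
Proof.
apply/fintype.subsetP => g gG; have [C CC gC] := ground_Cstar gG.
have [cl _] := ground_class gG CC gC.
apply/bigcupP; exists (U (comm_class C)); first exact: imset_f.
by apply/bigcupP; exists C; [exact: comm_class_self | exact: ground_Fmin].
Qed.

Lemma level_invariant_next : (1 < #|classes|)%N -> level_invariant Ps' prev'.
Proof.
move=> two; split.
- exact: next_plateaux_nonempty.
- exact: finset.trivIsetS next_prev_sub level_cycles_trivIset.
- by apply: contra level_cycles_nonempty; apply: (fintype.subsetP next_prev_sub).
- exact: next_Gam_gt0.
- exact: next_ground_covered.
- by rewrite card_next_plateaux.
Qed.

Lemma terminal_class_cover :
  #|classes| = 1%N -> {in classes, forall K : {set {set T}}, U K = ground}.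
Proof.
move=> one K KC; have [K1 eK1] : exists K1, classes = [set K1] by apply/cards1P; rewrite one.
have only_class K' : K' \in classes -> K' = K.
  by move: KC; rewrite eK1 => /set1P -> /set1P.
have [x _] := class_cover_nonempty KC; have [g0 g0G] := exists_ground x.
have [C0 C0C gC0] := ground_Cstar g0G; have [cl0 m0] := ground_class g0G C0C gC0.
apply/setP => y; apply/idP/idP => [/bigcupP [C CK /FminP [_ Hy]] | yG].
  rewrite -(only_class _ cl0) in CK; apply/groundP => z.
  by rewrite Hy (m0 _ CK); exact: groundP g0G z.
have [C CC yC] := ground_Cstar yG; have [cl _] := ground_class yG CC yC.
apply/bigcupP; exists C; last exact: ground_Fmin.
by rewrite -(only_class _ cl); exact: comm_class_self.
Qed.

End Level.

(** * The first level *)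

Local Notation plateaux1 := (plateaux1 adj H).

Lemma within_path_bdry (A B : {set T}) x s :
  path [rel a b | adj a b && (b \in A)] x s -> x \in B -> last x s \notin B ->
  exists2 b, b \in bdry B & b \in A.
Proof.
elim: s x => [|c s IH] x /=; first by move=> _ ->.
move=> /andP[/andP[axc cA] ps] xB lB; case cB: (c \in B); first exact: IH ps cB lB.
by exists c => //; rewrite inE cB /=; apply/exists_inP; exists x; rewrite // adj_sym.
Qed.

(* A stable plateau cannot leave another one it meets, since it would have to
   cross that plateau's strictly higher boundary at its own constant energy. *)
Lemma stable_plateau_sub P Q x : stable_plateau adj H P -> stable_plateau adj H Q ->
  x \in P -> x \in Q -> P \subset Q.
Proof.
move=> /and4P[_ Pc Pk _] /and4P[_ _ _ Qb] xP xQ; apply/fintype.subsetP => y yP.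
apply/negPn/negP => yQ.
move/forall_inP: Pc => /(_ x xP) /forall_inP /(_ y yP) /connectP [s ps ey].
have sQ : last x s \notin Q by rewrite -ey.
have [b bQ bP] := within_path_bdry ps xQ sQ.
move/forall_inP: Qb => /(_ b bQ) /forall_inP /(_ x xQ).
by move/forall_inP: Pk => /(_ b bP) /forall_inP /(_ x xP) /eqP ->; rewrite ltxx.
Qed.

Lemma plateaux1_trivIset : finset.trivIset plateaux1.
Proof.
apply/trivIset_uniqP => P Q x; rewrite !inE => /andP[sP _] /andP[sQ _] xP xQ.
apply/eqP; rewrite finset.eqEsubset.
by rewrite (stable_plateau_sub sP sQ xP xQ) (stable_plateau_sub sQ sP xQ xP).
Qed.

Lemma plateaux1_nonempty : finset.set0 \notin plateaux1.
Proof. by apply/negP; rewrite inE => /andP[/and4P[]]; rewrite eqxx. Qed.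

Lemma plateaux1_Gam_gt0 :
  (1 < #|plateaux1|)%N -> {in plateaux1, forall P, 0 < Gam adj H plateaux1 P}.
Proof.
move=> two P PP; have [Q QP QP'] := card_gt1_other two PP.
have [p0 p0P] := nonempty_mem plateaux1_nonempty PP.
have [q0 q0Q] := nonempty_mem plateaux1_nonempty QP.
apply: (Gam_gt0_barrier p0P (mem_others QP QP' q0Q)).
move=> p q pP /bigcupP [Q2 /andP[Q2P Q2P'] qQ2]; exists P; split => //.
  apply/negP => qP; have /trivIset_uniqP uniq := plateaux1_trivIset.
  by rewrite (uniq _ _ _ PP Q2P qP qQ2) eqxx in Q2P'.
move: PP; rewrite inE => /andP[/and4P[_ _ _ /forall_inP Pb] _] b bB.
by apply: le_lt_trans (minH_le pP) _; move/forall_inP: (Pb b bB); exact.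
Qed.

Definition ground_adj : rel T := [rel a b | [&& adj a b, a \in ground & b \in ground]].

Definition ground_component g : {set T} := [set y | connect ground_adj g y].

Lemma ground_adj_sym : symmetric ground_adj.
Proof. by move=> a b; rewrite /ground_adj /= adj_sym [(a \in _) && _]andbC. Qed.

Lemma connect_ground_adj g y : g \in ground -> connect ground_adj g y -> y \in ground.
Proof.
move=> gG gy; have [<- //|gny] := eqVneq g y.
by have [w /and3P[]] := connect_last_step gy gny.
Qed.

Lemma component_connected (e : rel T) g : connect_sym e -> subrel e adj ->
  set_connected adj [set y | connect e g y].
Proof.
move=> esym eadj; apply/forall_inP => x; rewrite inE => gx.
apply/forall_inP => y; rewrite inE => gy.
have /connectP [s es ->] : connect e x y by apply: connect_trans gy; rewrite esym.
elim: s x gx es => [|c s IH] x gx /=; first by rewrite connect0.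
move=> /andP[exc es]; have gc : connect e g c := connect_trans gx (connect1 exc).
by apply: connect_trans (IH c gc es); apply: connect1; rewrite /= eadj // inE.
Qed.

Lemma ground_component_stable g : g \in ground -> stable_plateau adj H (ground_component g).
Proof.
move=> gG; have sub y : y \in ground_component g -> y \in ground.
  by rewrite inE; exact: connect_ground_adj.
apply/and4P; split.
- by apply/finset.set0Pn; exists g; rewrite inE connect0.
- by apply: component_connected; [exact: sym_connect_sym ground_adj_sym | move=> a b /and3P[]].
- apply/forall_inP => x xC; apply/forall_inP => y yC.
  by rewrite (ground_H_eq (sub x xC) (sub y yC)).
apply/forall_inP => x; rewrite inE => /andP[xnC /exists_inP [z zC axz]].
have xnG : x \notin ground.
  apply: contra xnC => xG; move: (zC); rewrite !inE => gz.
  by apply: connect_trans gz (connect1 _); rewrite /ground_adj /= adj_sym axz xG (sub z zC).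
apply/forall_inP => y yC; have yG := sub y yC; rewrite lt_neqAle (groundP _ yG) andbT.
by apply: contraNneq xnG => e; apply/groundP => w; rewrite -e; exact: groundP yG w.
Qed.

Lemma ground_component_OmegaBar g : g \in ground -> ground_component g \subset OmegaBar adj H.
Proof.
move=> gG; apply/fintype.subsetP => x xC; rewrite inE.
have gx : Phi g x <= H g.
  apply/Phi_le_reach; move: xC; rewrite inE => /connectP [s gs ex]; exists s.
    by rewrite /Defs.is_path -ex eqxx andbT; apply: sub_path gs => a b /and3P[].
  apply/allP => z /(path_connect gs) gz.
  by rewrite (ground_H_eq (connect_ground_adj gG gz) gG).
have gg : Phi g g <= PhiBar adj H.
  apply: (@sup_finite_range_ge _ (T * T)%type (fun ab => Phi ab.1 ab.2)).
    by move=> r [ab _ <-]; exists ab.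
  by exists (g, g).
have := PhiS_le gG (set11 x); have := (Phi_ge_ends g g).1; lra.
Qed.

Lemma level_invariant_plateaux1 :
  (1 < #|plateaux1|)%N -> level_invariant plateaux1 finset.set0.
Proof.
move=> two; split => //.
- exact: plateaux1_nonempty.
- by apply/trivIset_uniqP => C; rewrite inE.
- by rewrite inE.
- exact: plateaux1_Gam_gt0.
apply/fintype.subsetP => g gG; apply/bigcupP; exists (ground_component g).
  by rewrite inE ground_component_stable ?ground_component_OmegaBar.
by rewrite inE connect0.
Qed.

End Landscape.

Unset Implicit Arguments.

Theorem mainTheorem8 (R : realType) (T : finType) (adj : rel T) (H : T -> R)
  (adj_sym : symmetric adj) (adj_irr : irreflexive adj)
  (adj_conn : forall x y : T, connect adj x y)
  (nu0_ge2 : (2 <= nu adj H 0)%N)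
  (m : nat) (m_ge1 : (1 <= m)%N)
  (nu_before : forall h : nat, (1 <= h)%N -> (h < m)%N -> (2 <= nu adj H h)%N)
  (nu_m : nu adj H m = 1%N) :
  forall K : {set {set T}}, K \in classes_at adj H m ->
    \bigcup_(C in K) Fmin H C = ground H.
Proof.
have inv h : (1 <= h)%N -> (h <= m)%N ->
    level_invariant adj H (level_input adj H h).1 (level_input adj H h).2.
  elim: h => [//|[|h] IH] _ hm.
    exact: level_invariant_plateaux1 adj_sym adj_conn nu0_ge2.
  by have := level_invariant_next adj_sym adj_conn (IH isT (ltnW hm)) (nu_before h.+1 isT hm).
case: m m_ge1 nu_before nu_m inv => // m _ _ nu_m inv.
by have := terminal_class_cover adj_sym adj_conn (inv m.+1 isT (leqnn _)) nu_m.
Qed.
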